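(* Let $H$ be a bialgebra that is projective as a $k$-module, $A$ a left $H$-comodule algebra, and consider the Doi-Hopf datum $(H,A,H)$ ($H$ acting on itself by right multiplication). If $\gamma:H\to\mathrm{Hom}(H,A)$ is an $A$-integral, then $\varphi_\gamma:H\to A$, $\varphi_\gamma(h)=\gamma(h)(1_H)$, is left $H$-colinear; if moreover $\gamma$ is total, then $\varphi_\gamma(1_H)=1_A$, i.e. $\varphi_\gamma$ is a total integral in the sense of Doi.
   Context: $k$ commutative ring; Sweedler notation $\Delta(h)=\sum h_{(1)}\otimes h_{(2)}$, $\rho_A(a)=\sum a_{<-1>}\otimes a_{<0>}$ (iterated $a_{<-2>}\otimes a_{<-1>}\otimes a_{<0>}$). A left $H$-comodule algebra is an algebra $A$ with a left $H$-coaction that is an algebra map. For the Doi-Hopf datum $(H,A,C)$ with $C=H$ and $c\cdot h=ch$, an $A$-integral is a $k$-linear $\gamma:H\to\mathrm{Hom}(H,A)$ with, for all $a\in A$, $c,d\in H$: (i) $\sum a_{<0>}\gamma(ca_{<-2>})(da_{<-1>})=\gamma(c)(d)\,a$; (ii) $\sum c_{(1)}\otimes\gamma(c_{(2)})(d)=\sum d_{(2)}\gamma(c)(d_{(1)})_{<-1>}\otimes\gamma(c)(d_{(1)})_{<0>}$; it is total if $\sum\gamma(c_{(1)})(c_{(2)})=\varepsilon(c)1_A$. A total integral (Doi) is a left $H$-colinear map $\varphi:H\to A$ with $\varphi(1_H)=1_A$. *)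

From HB Require Import structures.
From mathcomp Require Import all_boot all_order all_algebra.
Set Implicit Arguments. Unset Strict Implicit. Unset Printing Implicit Defensive.
Import Order.TTheory GRing.Theory Num.Theory.
Local Open Scope ring_scope.

(* Elements of tensor products over the commutative ring k are
   represented by finite lists of elementary tensors (Sweedler representatives);
   equality in the tensor product is characterized by the universal property:
   two such lists denote the same tensor iff every k-multilinear map takes the
   same value on them. *)

Section Defs.
Variable k : comNzRingType.

Definition klinear (M N : lmodType k) (f : M -> N) : Prop :=
  forall (a : k) (x y : M), f (a *: x + y) = a *: f x + f y.

Definition kbilinear (M N P : lmodType k) (b : M -> N -> P) : Prop :=
  (forall y, klinear (fun x => b x y)) /\ (forall x, klinear (b x)).

Definition ktrilinear (M N L P : lmodType k) (t : M -> N -> L -> P) : Prop :=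
  (forall y z, klinear (fun x => t x y z)) /\
  (forall x z, klinear (fun y => t x y z)) /\
  (forall x y, klinear (t x y)).

Definition tensor2_eq (M N : lmodType k) (s t : seq (M * N)) : Prop :=
  forall (P : lmodType k) (b : M -> N -> P), kbilinear b ->
    \sum_(p <- s) b p.1 p.2 = \sum_(p <- t) b p.1 p.2.

Definition tensor3_eq (M N L : lmodType k) (s t : seq (M * N * L)) : Prop :=
  forall (P : lmodType k) (b : M -> N -> L -> P), ktrilinear b ->
    \sum_(p <- s) b p.1.1 p.1.2 p.2 = \sum_(p <- t) b p.1.1 p.1.2 p.2.

Definition projective_kmod (M : lmodType k) : Prop :=
  forall (P Q : lmodType k) (f : P -> Q) (g : M -> Q),
    klinear f -> klinear g -> (forall q, exists p, f p = q) ->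
    exists h : M -> P, klinear h /\ forall m, f (h m) = g m.

Variable H : algType k.

(* Delta (h) = sum h_(1) (x) h_(2) ; eps the counit *)
Definition is_bialgebra (Delta : H -> seq (H * H)) (eps : H -> k) : Prop :=
  [/\
      forall (a : k) (x y : H),
        tensor2_eq (Delta (a *: x + y))
                   ([seq (a *: p.1, p.2) | p <- Delta x] ++ Delta y),
      forall h : H,
        tensor3_eq [seq (q.1, q.2, p.2) | p <- Delta h, q <- Delta p.1]
                   [seq (p.1, q.1, q.2) | p <- Delta h, q <- Delta p.2],
      (forall (a : k) (x y : H), eps (a *: x + y) = a * eps x + eps y) /\
      (forall h : H, \sum_(p <- Delta h) eps p.1 *: p.2 = h) /\
      (forall h : H, \sum_(p <- Delta h) eps p.2 *: p.1 = h),
      tensor2_eq (Delta 1) [:: (1, 1)] /\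
      (forall x y : H,
        tensor2_eq (Delta (x * y))
                   [seq (p.1 * q.1, p.2 * q.2) | p <- Delta x, q <- Delta y])
    &
      eps 1 = 1 /\ forall x y : H, eps (x * y) = eps x * eps y].

(* rho (a) = sum a_<-1> (x) a_<0> : a left H-comodule algebra structure on A *)
Definition is_left_comodule_algebra (A : algType k)
    (Delta : H -> seq (H * H)) (eps : H -> k) (rho : A -> seq (H * A)) : Prop :=
  [/\ forall (a : k) (x y : A),
        tensor2_eq (rho (a *: x + y))
                   ([seq (a *: p.1, p.2) | p <- rho x] ++ rho y),
      forall x : A,
        tensor3_eq [seq (q.1, q.2, p.2) | p <- rho x, q <- Delta p.1]
                   [seq (p.1, q.1, q.2) | p <- rho x, q <- rho p.2],
      forall x : A, \sum_(p <- rho x) eps p.1 *: p.2 = x,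
      tensor2_eq (rho 1) [:: (1, 1)]
    & forall x y : A,
        tensor2_eq (rho (x * y))
                   [seq (p.1 * q.1, p.2 * q.2) | p <- rho x, q <- rho y]].

(* A-integral for the Doi-Hopf datum (H, A, H), C = H acted on by right
   multiplication; gamma : H -> Hom(H, A) k-linear, written curried. *)
Definition is_A_integral (A : algType k) (Delta : H -> seq (H * H))
    (rho : A -> seq (H * A)) (gamma : H -> H -> A) : Prop :=
  [/\ (forall d : H, klinear (fun c => gamma c d)),
      forall c : H, klinear (gamma c),
      forall (a : A) (c d : H),
        \sum_(p <- rho a) \sum_(q <- Delta p.1)
            p.2 * gamma (c * q.1) (d * q.2) = gamma c d * a
    & (* (ii) *)
      forall c d : H,
        tensor2_eq [seq (q.1, gamma q.2 d) | q <- Delta c]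
          [seq (q.2 * r.1, r.2) | q <- Delta d, r <- rho (gamma c q.1)]].

Definition is_total_integral (A : algType k) (Delta : H -> seq (H * H))
    (eps : H -> k) (gamma : H -> H -> A) : Prop :=
  forall c : H, \sum_(q <- Delta c) gamma q.1 q.2 = eps c *: (1 : A).

Definition left_colinear (A : algType k) (Delta : H -> seq (H * H))
    (rho : A -> seq (H * A)) (phi : H -> A) : Prop :=
  [/\ klinear phi &
   forall h : H, tensor2_eq (rho (phi h)) [seq (q.1, phi q.2) | q <- Delta h]].

End Defs.

(* Only the normalisation [Delta 1 = 1 (x) 1] and condition (ii) at [d = 1] are
   needed.  For colinearity, (ii) at [d = 1] reads
   [sum h_(1) (x) gamma(h_(2))(1) = sum 1_(2) gamma(h)(1_(1))_<-1> (x) gamma(h)(1_(1))_<0>],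
   and [Delta 1 = 1 (x) 1] turns the right-hand side into [rho (gamma h 1)].
   Totality at [c = 1] gives [gamma 1 1 = eps 1 *: 1 = 1] in the same way. *)

From HB Require Import structures.
From mathcomp Require Import all_boot all_order all_algebra.
Set Implicit Arguments. Unset Strict Implicit. Unset Printing Implicit Defensive.
Import GRing.Theory.
Local Open Scope ring_scope.

Section KLinear.
Variable k : comNzRingType.

Lemma klinear0 (M N : lmodType k) (f : M -> N) : klinear f -> f 0 = 0.
Proof.
move=> fl; have := fl 1 0 0; rewrite scaler0 add0r scale1r => e.
by apply: (@addrI _ (f 0)); rewrite addr0 -e.
Qed.

Lemma klinearZ (M N : lmodType k) (f : M -> N) a x :
  klinear f -> f (a *: x) = a *: f x.
Proof. by move=> fl; have := fl a x 0; rewrite addr0 (klinear0 fl) addr0. Qed.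

Lemma klinear_comp (M N L : lmodType k) (f : M -> N) (g : N -> L) :
  klinear f -> klinear g -> klinear (g \o f).
Proof. by move=> fl gl a x y /=; rewrite fl gl. Qed.

Lemma tensor2_eq_seq1 (M N P : lmodType k) (s : seq (M * N)) x y
    (b : M -> N -> P) :
  tensor2_eq s [:: (x, y)] -> kbilinear b -> \sum_(p <- s) b p.1 p.2 = b x y.
Proof. by move=> eq_s bb; rewrite (eq_s _ _ bb) big_seq1. Qed.

Section TensorValuedLinear.
Variables (M N P : lmodType k) (rho : M -> seq (N * P)).
Hypothesis rho_linear : forall a x y,
  tensor2_eq (rho (a *: x + y)) ([seq (a *: p.1, p.2) | p <- rho x] ++ rho y).

Lemma klinear_tensor_sum (Q : lmodType k) (b : N -> P -> Q) :
  kbilinear b -> klinear (fun x => \sum_(r <- rho x) b r.1 r.2).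
Proof.
move=> bb a x y; have [bl _] := bb.
rewrite (rho_linear _ _ _ bb) big_cat big_map /= scaler_sumr.
by congr (_ + _); apply: eq_bigr => r _; rewrite (klinearZ _ _ (bl r.2)).
Qed.

End TensorValuedLinear.
End KLinear.

Section Twist.
Variables (k : comNzRingType) (H A : algType k) (rho : A -> seq (H * A)).
Hypothesis rho_linear : forall a x y,
  tensor2_eq (rho (a *: x + y)) ([seq (a *: p.1, p.2) | p <- rho x] ++ rho y).

Definition coaction_twist (P : lmodType k) (b : H -> A -> P) (x : A) (y : H) :=
  \sum_(r <- rho x) b (y * r.1) r.2.

Lemma kbilinear_coaction_twist (P : lmodType k) (b : H -> A -> P) :
  kbilinear b -> kbilinear (coaction_twist b).
Proof.
move=> [bl br]; split=> [y | x] a u v.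
- have byl : kbilinear (fun (w : H) (z : A) => b (y * w) z).
    by split=> [z | w] a' u' v' /=; [rewrite mulrDr -scalerAr bl | exact: br].
  exact: (klinear_tensor_sum rho_linear byl).
- rewrite /coaction_twist scaler_sumr -big_split /=.
  by apply: eq_bigr => r _; rewrite mulrDl -scalerAl bl.
Qed.

End Twist.

Section IntegralAtOne.
Variables (k : comNzRingType) (H A : algType k).
Variables (Delta : H -> seq (H * H)) (rho : A -> seq (H * A)).
Variable gamma : H -> H -> A.
Hypothesis Delta1 : tensor2_eq (Delta 1) [:: (1, 1)].

Lemma A_integral_colinear :
  (forall a x y, tensor2_eq (rho (a *: x + y))
                   ([seq (a *: p.1, p.2) | p <- rho x] ++ rho y)) ->
  is_A_integral Delta rho gamma -> left_colinear Delta rho (fun h => gamma h 1).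
Proof.
move=> rho_linear [gamma_l gamma_r _ gamma_ii].
split=> [|h P b bb]; first exact: gamma_l.
rewrite (gamma_ii h 1 P b bb) big_allpairs_dep /=.
have twist_bb := kbilinear_coaction_twist rho_linear bb.
have bb' : kbilinear (fun x y => coaction_twist rho b (gamma h x) y).
  split=> [y | x]; last exact: twist_bb.2.
  exact: klinear_comp (gamma_r h) (twist_bb.1 y).
rewrite (tensor2_eq_seq1 Delta1 bb') /coaction_twist.
by apply: eq_bigr => r _; rewrite mul1r.
Qed.

Lemma total_integral_at_one (eps : H -> k) :
  eps 1 = 1 -> (forall d, klinear (fun c => gamma c d)) ->
  (forall c, klinear (gamma c)) ->
  is_total_integral Delta eps gamma -> gamma 1 1 = 1.
Proof.
move=> eps1 gamma_l gamma_r total.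
by rewrite -(tensor2_eq_seq1 Delta1 (conj gamma_l gamma_r)) total eps1 scale1r.
Qed.

End IntegralAtOne.

Theorem proposition3p1p1 (k : comNzRingType) (H A : algType k)
    (Delta : H -> seq (H * H)) (eps : H -> k) (rho : A -> seq (H * A))
    (gamma : H -> H -> A) :
  is_bialgebra Delta eps ->
  projective_kmod H ->
  is_left_comodule_algebra Delta eps rho ->
  is_A_integral Delta rho gamma ->
  left_colinear Delta rho (fun h => gamma h 1) /\
  (is_total_integral Delta eps gamma -> gamma 1 1 = 1).
Proof.
move=> [_ _ _ [Delta1 _] [eps1 _]] _ [rho_linear _ _ _ _] gammaA.
split; first exact: A_integral_colinear.
have [gamma_l gamma_r _ _] := gammaA.
exact: total_integral_at_one.
Qed.
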